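(* Let $\rho$ be a growth function and $m\ge2$ an integer. Let $\sigma=(\sigma_1,\dots,\sigma_m)\in\{-1,1\}^m$ with $\sigma_i=-1$ and $\sigma_{i+1}=1$ for some $1\le i\le m-1$, and let $\phi\in\{-1,1\}^m$ be given by $\phi_i=1$, $\phi_{i+1}=-1$, and $\phi_j=\sigma_j$ for $j\notin\{i,i+1\}$. If $f^\rho_\sigma=(a_\sigma,b_\sigma)$ and $f^\rho_\phi=(a_\phi,b_\phi)$, then $a_\sigma\le a_\phi$ and $b_\sigma=b_\phi$.
   Context: A growth function is an increasing $\rho:\mathbb{R}\to\mathbb{R}^{\ge0}$. Binary strings are elements of $\{-1,1\}^m$ (the empty string $<>$ for $m=0$); $\sigma\wedge u$ denotes concatenation. $f^\rho_\sigma\in\mathbb{R}^2$ is defined recursively: $f^\rho_{<>}=(0,0)$, and if $f^\rho_\sigma=(a,b)$ then $f^\rho_{\sigma\wedge1}=(a+1,b+1)$ and $f^\rho_{\sigma\wedge-1}=(a+\rho(a+b),b-1)$. *)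

From Stdlib Require Import Reals List ZArith.
Import ListNotations.
Open Scope R_scope.

Definition growth_function (rho : R -> R) : Prop :=
  (forall x y, x <= y -> rho x <= rho y) /\ (forall x, 0 <= rho x).

Definition binary_string (s : list Z) : Prop :=
  Forall (fun u => u = 1%Z \/ u = (-1)%Z) s.

Definition f_step (rho : R -> R) (p : R * R) (u : Z) : R * R :=
  let (a, b) := p in
  if Z.eqb u 1 then (a + 1, b + 1) else (a + rho (a + b), b - 1).

Definition f_rho (rho : R -> R) (s : list Z) : R * R :=
  fold_left (f_step rho) s (0, 0).

(* Reading a -1 then a 1 from (a, b) gives (a + rho (a + b) + 1, b), reading them
   in the opposite order gives (a + 1 + rho (a + b + 2), b); monotonicity of rho
   compares the two.  Since each step is monotone in the first coordinate when the
   second coordinates agree, this comparison survives the common suffix. *)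

From Stdlib Require Import Reals List ZArith Lia Lra.
Open Scope R_scope.

Section GrowthFunction.

Variable rho : R -> R.
Hypothesis rho_growth : growth_function rho.

Lemma f_step_mono (p q : R * R) (u : Z) :
  fst p <= fst q -> snd p = snd q ->
  fst (f_step rho p u) <= fst (f_step rho q u) /\
  snd (f_step rho p u) = snd (f_step rho q u).
Proof.
  destruct rho_growth as [rho_mono _], p as [a b], q as [c d]; simpl.
  intros Hac <-; unfold f_step.
  destruct (Z.eqb u 1); simpl; [lra|].
  assert (rho (a + b) <= rho (c + b)) by (apply rho_mono; lra).
  lra.
Qed.

Lemma fold_f_step_mono (l : list Z) (p q : R * R) :
  fst p <= fst q -> snd p = snd q ->
  fst (fold_left (f_step rho) l p) <= fst (fold_left (f_step rho) l q) /\
  snd (fold_left (f_step rho) l p) = snd (fold_left (f_step rho) l q).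
Proof.
  revert p q; induction l as [|u l IH]; intros p q Hfst Hsnd; simpl.
  - split; assumption.
  - apply IH; apply f_step_mono; assumption.
Qed.

Lemma f_step_down_up_le (p : R * R) :
  fst (f_step rho (f_step rho p (-1)) 1) <= fst (f_step rho (f_step rho p 1) (-1)) /\
  snd (f_step rho (f_step rho p (-1)) 1) = snd (f_step rho (f_step rho p 1) (-1)).
Proof.
  destruct rho_growth as [rho_mono _], p as [a b]; simpl.
  assert (rho (a + b) <= rho (a + 1 + (b + 1))) by (apply rho_mono; lra).
  split; lra.
Qed.

Lemma f_rho_swap_down_up (l r : list Z) :
  fst (f_rho rho (l ++ (-1)%Z :: 1%Z :: r)) <=
    fst (f_rho rho (l ++ 1%Z :: (-1)%Z :: r)) /\
  snd (f_rho rho (l ++ (-1)%Z :: 1%Z :: r)) =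
    snd (f_rho rho (l ++ 1%Z :: (-1)%Z :: r)).
Proof.
  unfold f_rho.
  rewrite !fold_left_app; cbn [fold_left].
  destruct (f_step_down_up_le (fold_left (f_step rho) l (0, 0))).
  apply fold_f_step_mono; assumption.
Qed.

End GrowthFunction.

Lemma list_split_pair (s : list Z) (k : nat) : (S k < length s)%nat ->
  s = firstn k s ++ nth k s 0%Z :: nth (S k) s 0%Z :: skipn (S (S k)) s.
Proof.
  revert k; induction s as [|x s IH]; intros k Hk; simpl in Hk; [lia|].
  destruct k as [|k].
  - destruct s as [|y s]; simpl in *; [lia | reflexivity].
  - simpl; f_equal; apply IH; lia.
Qed.

Lemma list_eq_outside_pair (s t : list Z) (k : nat) :
  length s = length t ->
  (forall j, (j < length s)%nat -> j <> k -> j <> S k -> nth j s 0%Z = nth j t 0%Z) ->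
  firstn k s = firstn k t /\ skipn (S (S k)) s = skipn (S (S k)) t.
Proof.
  intros Hlen Hnth; split; apply nth_ext with (d := 0%Z) (d' := 0%Z).
  - rewrite !firstn_length; lia.
  - intros n Hn; rewrite firstn_length in Hn; rewrite !nth_firstn.
    destruct (Nat.ltb_spec n k); [apply Hnth; lia | reflexivity].
  - rewrite !skipn_length; lia.
  - intros n Hn; rewrite skipn_length in Hn; rewrite !nth_skipn.
    apply Hnth; lia.
Qed.

(* Index i is 1-based as in the paper: sigma_i = nth (i-1), sigma_{i+1} = nth i. *)
Theorem mainTheorem16 (rho : R -> R) (m : nat) (sigma phi : list Z) (i : nat) :
  growth_function rho ->
  (2 <= m)%nat ->
  binary_string sigma -> length sigma = m ->
  binary_string phi -> length phi = m ->
  (1 <= i)%nat -> (i <= m - 1)%nat ->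
  nth (i - 1) sigma 0%Z = (-1)%Z -> nth i sigma 0%Z = 1%Z ->
  nth (i - 1) phi 0%Z = 1%Z -> nth i phi 0%Z = (-1)%Z ->
  (forall j, (j < m)%nat -> j <> (i - 1)%nat -> j <> i -> nth j phi 0%Z = nth j sigma 0%Z) ->
  fst (f_rho rho sigma) <= fst (f_rho rho phi) /\
  snd (f_rho rho sigma) = snd (f_rho rho phi).
Proof.
  intros Hrho _ _ Hsigma _ Hphi Hi1 Him sigma_i sigma_Si phi_i phi_Si Hagree.
  destruct i as [|k]; [lia|].
  rewrite Nat.sub_succ, Nat.sub_0_r in *.
  destruct (list_eq_outside_pair sigma phi k) as [Hpre Hsuf]; [lia | |].
  { intros j Hj Hjk HjSk; symmetry; apply Hagree; lia. }
  rewrite (list_split_pair sigma k), (list_split_pair phi k) by lia.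
  rewrite sigma_i, sigma_Si, phi_i, phi_Si, Hpre, Hsuf.
  apply f_rho_swap_down_up; assumption.
Qed.
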